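(* Let $P$ be an admissible Hilbert polynomial and $n>\deg P$ a positive integer. Then $\lambda(L^P_n)=L^{\lambda(P)}_{n+1}$. Moreover, $\lambda(L(a_0,a_1,\dots,a_{n-1}))=L(0,a_0,a_1,\dots,a_{n-1})$ for all $a_0,\dots,a_{n-1}\in\mathbb{N}$; in particular extension preserves codimension, i.e. $(n+1)-\deg\lambda(P)=n-\deg P$.
   Context: $\Bbbk$ is an algebraically closed field. For an ideal $I\subseteq\Bbbk[x_0,\dots,x_n]$, its extension is $\lambda(I):=I\cdot\Bbbk[x_0,\dots,x_{n+1}]$. For $a_0,\dots,a_{n-1}\in\mathbb{N}$, $L(a_0,\dots,a_{n-1})\subseteq\Bbbk[x_0,\dots,x_n]$ is the monomial ideal generated by $x_0^{a_{n-1}+1},\ x_0^{a_{n-1}}x_1^{a_{n-2}+1},\ \dots,\ x_0^{a_{n-1}}x_1^{a_{n-2}}\cdots x_{n-3}^{a_2}x_{n-2}^{a_1+1},\ x_0^{a_{n-1}}x_1^{a_{n-2}}\cdots x_{n-2}^{a_1}x_{n-1}^{a_0}$. Binomial coefficients are polynomials: $\binom{t+a}{b}=\frac{(t+a)\cdots(t+a-b+1)}{b!}$ for $b\ge 0$, $0$ for $b<0$. An admissible Hilbert polynomial is the Hilbert polynomial of a nonempty closed subscheme of some projective space; it has a unique Gotzmann expression $P(t)=\sum_{j=1}^r\binom{t+b_j-(j-1)}{b_j}$ with $b_1\ge\dots\ge b_r\ge0$; $\lambda(P)$ denotes the admissible polynomial with Gotzmann expression $\sum_{j=1}^r\binom{t+b_j+1-(j-1)}{b_j+1}$.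 Lexicographic order: $x^u>x^v$ if the first nonzero coordinate of $u-v$ is positive. For a homogeneous ideal $I$ with Hilbert function $H$, $L^H_n$ is the monomial ideal whose degree-$i$ piece is spanned by the $\dim_\Bbbk I_i$ lex-largest degree-$i$ monomials; for admissible $P$ with $\deg P<n$, $L^P_n$ is the saturation of $L^{H_I}_n$ with respect to $\langle x_0,\dots,x_n\rangle$ for any homogeneous $I$ with Hilbert polynomial $P$ (it depends only on $P,n$). The codimension of $L^P_n$ is $n-\deg P$. *)

From HB Require Import structures.
From mathcomp Require Import all_boot all_order all_algebra.
From mathcomp Require Import mpoly.

Set Implicit Arguments.
Unset Strict Implicit.
Unset Printing Implicit Defensive.

Import Order.TTheory GRing.Theory Num.Theory.
Local Open Scope ring_scope.

Section Ideals.
Variable k : fieldType.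
Variable m : nat.

Definition is_ideal (I : {mpoly k[m]} -> Prop) : Prop :=
  [/\ I 0, (forall f g, I f -> I g -> I (f + g)) & (forall f g, I g -> I (f * g))].

Definition hcomp (d : nat) (f : {mpoly k[m]}) : {mpoly k[m]} :=
  \sum_(u <- msupp f | mdeg u == d) f@_u *: 'X_[u].

(* f is homogeneous of degree d (0 is homogeneous of every degree) *)
Definition is_dhomog (d : nat) (f : {mpoly k[m]}) : Prop :=
  forall u, u \in msupp f -> mdeg u = d.

Definition is_homog_ideal (I : {mpoly k[m]} -> Prop) : Prop :=
  is_ideal I /\ (forall f d, I f -> I (hcomp d f)).

Definition deg_piece (I : {mpoly k[m]} -> Prop) (d : nat) (f : {mpoly k[m]}) : Prop :=
  I f /\ is_dhomog d f.

Definition lin_indep (s : seq {mpoly k[m]}) : Prop :=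
  forall c : seq k, size c = size s ->
    \sum_(i < size s) c`_i *: s`_i = 0 -> forall i, (i < size s)%N -> c`_i = 0.

Definition is_dim (V : {mpoly k[m]} -> Prop) (d : nat) : Prop :=
  (exists s : seq {mpoly k[m]}, [/\ size s = d, (forall f, f \in s -> V f) & lin_indep s])
  /\ (forall s : seq {mpoly k[m]}, (forall f, f \in s -> V f) -> lin_indep s -> (size s <= d)%N).

Definition nmon (d : nat) : nat := #|[set v : 'X_{1..m < d.+1} | mdeg v == d]|.

(* the Hilbert function of k[x]/I, given that h d = dim_k I_d for every d *)
Definition hilb_fun (h : nat -> nat) (d : nat) : nat := (nmon d - h d)%N.

Definition is_hilb_poly (h : nat -> nat) (P : {poly rat}) : Prop :=
  exists d0, forall d, (d0 <= d)%N -> ((hilb_fun h d)%:R : rat) = P.[d%:R].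

Definition lex_gt (u v : 'X_{1..m}) : bool :=
  [exists i : 'I_m, (v i < u i)%N && [forall j : 'I_m, (j < i)%N ==> (u j == v j)]].

Definition lex_top (h : nat -> nat) (u : 'X_{1..m}) : bool :=
  (#|[set v : 'X_{1..m < (mdeg u).+1} | (mdeg v == mdeg u) && lex_gt v u]| < h (mdeg u))%N.

(* L^H: the monomial ideal whose degree-d piece is spanned by the h(d)
   lex-largest monomials of degree d (h d = dim_k I_d) *)
Definition lex_ideal (h : nat -> nat) (f : {mpoly k[m]}) : Prop :=
  forall u, u \in msupp f -> lex_top h u.

(* power of the irrelevant ideal <x_0..x_(m-1)>^e: polys with all monomials of degree >= e *)
Definition irr_pow (e : nat) (g : {mpoly k[m]}) : Prop :=
  forall u, u \in msupp g -> (e <= mdeg u)%N.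

Definition saturation (J : {mpoly k[m]} -> Prop) (f : {mpoly k[m]}) : Prop :=
  exists e, forall g, irr_pow e g -> J (g * f).

Definition gen_ideal (gs : seq {mpoly k[m]}) (f : {mpoly k[m]}) : Prop :=
  exists c : seq {mpoly k[m]}, size c = size gs /\ f = \sum_(i < size gs) c`_i * gs`_i.

Definition same_ideal (I J : {mpoly k[m]} -> Prop) : Prop := forall f, I f <-> J f.

End Ideals.

Definition ext_ideal (k : fieldType) (m : nat) (I : {mpoly k[m]} -> Prop)
  (f : {mpoly k[m.+1]}) : Prop :=
  exists r (g : 'I_r -> {mpoly k[m.+1]}) (p : 'I_r -> {mpoly k[m]}),
    (forall j, I (p j)) /\ f = \sum_(j < r) g j * mwiden (p j).

(* admissible Hilbert polynomial: Hilbert polynomial of a nonempty closed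
   subscheme of some P^N over k, i.e. of k[x_0..x_N]/I for a homogeneous ideal I,
   nonemptiness being P <> 0 *)
Definition admissible (k : fieldType) (P : {poly rat}) : Prop :=
  P != 0 /\
  exists (N : nat) (I : {mpoly k[N.+1]} -> Prop) (h : nat -> nat),
    [/\ is_homog_ideal I, (forall d, is_dim (deg_piece I d) (h d)) & is_hilb_poly N.+1 h P].

(* binomial coefficient polynomial binom(t + a, b) *)
Definition binpoly (a : int) (b : nat) : {poly rat} :=
  (b`!%:R)^-1 *: \prod_(i < b) ('X + ((a - i%:Z)%:~R)%:P).

(* sum_{j=1}^r binom(t + b_j - (j-1), b_j), with b indexed from 0 *)
Definition gotzmann (r : nat) (b : nat -> nat) : {poly rat} :=
  \sum_(j < r) binpoly ((b j)%:Z - j%:Z) (b j).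

Definition gotz_seq (r : nat) (b : nat -> nat) : Prop :=
  forall i j, (i <= j)%N -> (j < r)%N -> (b j <= b i)%N.

(* lambda(P) computed from the Gotzmann expression (r, b) of P *)
Definition gotzmann_lambda (r : nat) (b : nat -> nat) : {poly rat} :=
  \sum_(j < r) binpoly ((b j)%:Z + 1 - j%:Z) (b j).+1.

(* generators of L(a_0, ..., a_(n-1)) in k[x_0..x_n] *)
Definition Lgen_exp (n : nat) (a : nat -> nat) (kk : nat) : 'X_{1..n.+1} :=
  [multinom (if (i < kk)%N then a (n.-1 - i)%N
             else if i == kk :> nat then (a (n.-1 - kk)%N + (kk < n.-1)%N)%N
             else 0%N) | i < n.+1].

Definition L_ideal (k : fieldType) (n : nat) (a : nat -> nat) : {mpoly k[n.+1]} -> Prop :=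
  gen_ideal [seq 'X_[Lgen_exp n a kk] | kk <- iota 0 n].

Definition shift0 (a : nat -> nat) (j : nat) : nat := if j is j'.+1 then a j' else 0%N.

From HB Require Import structures.
From mathcomp Require Import all_boot all_order all_algebra.
From mathcomp Require Import mpoly zify.
Import Order.TTheory GRing.Theory Num.Theory.

(* Let A = (a_(n-1), ..., a_0) be the exponent vector of the last generator of
   L(a_0, ..., a_(n-1)).  A polynomial lies in L(a) iff each of its monomials
   x^u has (u_0, ..., u_(n-1)) lexicographically at least A.  The saturated lex
   ideal with Gotzmann expression (b_j)_(j < r) is of this form with
   a_e = #{j | b_j = e}: in every degree d >= r, the monomials whose first n
   exponents are lexicographically below A number
   sum_j binom(d - j + b_j, b_j) = P(d), which is exactly what the lex ideal
   leaves out.  Extending to one more variable appends a zero to A, and so does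
   replacing every b_j by b_j + 1, i.e. passing from P to lambda(P). *)

Set Implicit Arguments.
Unset Strict Implicit.
Unset Printing Implicit Defensive.

Local Notation lexi := (seqlexi nat).

(** * Lexicographic order on sequences of naturals *)

Lemma ltxi_cat (s1 s2 t1 t2 : seq nat) : size s1 = size t1 ->
  (s1 ++ s2 < t1 ++ t2 :> lexi)%O =
  (s1 < t1 :> lexi)%O || (s1 == t1) && (s2 < t2 :> lexi)%O.
Proof.
elim: s1 t1 => [|x s IH] [|y t] //= [/IH {}IH].
by rewrite !ltxi_cons IH eqseq_cons !leEnat; case: (ltngtP x y) => //= ->.
Qed.

Lemma lexi_nth (s t : seq nat) : size s = size t ->
  (forall i, nth 0 s i <= nth 0 t i) -> (s <= t :> lexi)%O.
Proof.
elim: s t => [|x s IH] [|y t] //= [/IH {}IH] le_st.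
rewrite lexi_cons leEnat (le_st 0) IH ?implybT // => i.
exact: (le_st i.+1).
Qed.

Lemma ltxi_nseq0 (s : seq nat) : (s < nseq (size s) 0 :> lexi)%O = false.
Proof.
apply/negbTE; rewrite -leNgt; apply: lexi_nth => [|i]; first by rewrite size_nseq.
by rewrite nth_nseq if_same.
Qed.

Lemma lexi_take (s t : seq nat) k :
  (s <= t :> lexi)%O -> (take k s <= take k t :> lexi)%O.
Proof.
elim: s t k => [|x s IH] [|y t] [|k] //=; rewrite !lexi_cons => /andP[-> /implyP le_st].
by apply/implyP => /le_st /IH.
Qed.

Lemma ltxi_nthP (s t : seq nat) : size s = size t ->
  reflect (exists i, [/\ i < size s, nth 0 s i < nth 0 t i &
                         forall j, j < i -> nth 0 s j = nth 0 t j])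
          (s < t :> lexi)%O.
Proof.
elim: s t => [|x s IH] [|y t] //= => [_|[/IH {}IH]]; first by right=> -[? []].
rewrite ltxi_cons !leEnat; case: (ltngtP x y) => [lt_xy|lt_yx|<-] /=.
- by left; exists 0.
- right=> -[[|i] [_ /= lt_i eq_j]]; first by rewrite ltnNge ltnW in lt_i.
  by move: (eq_j 0 isT) lt_yx => /= ->; rewrite ltnn.
- apply: (iffP IH) => [[i [lt_is lt_i eq_j]]|[[|i] [lt_is /= lt_i eq_j]]].
  + by exists i.+1; split => // -[|j] //= /eq_j.
  + by rewrite ltnn in lt_i.
  + by exists i; split => // j lt_ji; apply: (eq_j j.+1).
Qed.

Section LexBump.
Variables (s1 s2 t1 : seq nat) (y x : nat).
Hypothesis size_s1t1 : size s1 = size t1.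
Let z := nseq (size s2) 0.

Lemma ltxi_bump : (s1 ++ y :: s2 < t1 ++ x.+1 :: z :> lexi)%O =
  (s1 ++ y :: s2 < t1 ++ x :: z :> lexi)%O || (s1 == t1) && (y == x).
Proof.
rewrite !ltxi_cat // !ltxi_cons ltxi_nseq0 !implybF -!ltNge !leEnat !ltEnat /ltn /=.
by case: (s1 == t1); rewrite //= -orbA; congr (_ || _); lia.
Qed.

Lemma ltxi_bump_eq : s1 = t1 -> y = x -> (s1 ++ y :: s2 < t1 ++ x :: z :> lexi)%O = false.
Proof. by move=> -> ->; rewrite ltxi_cat // ltxx eqxx ltxi_cons ltxi_nseq0 lexx. Qed.

End LexBump.

Lemma incr_nthE (t : seq nat) c : c < size t ->
  incr_nth t c = take c t ++ (nth 0 t c).+1 :: drop c.+1 t.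
Proof. by elim: t c => [|x t IH] [|c] //= => [_|/IH ->]; rewrite ?drop0. Qed.

Lemma sumn_incr_nth s i : sumn (incr_nth s i) = (sumn s).+1.
Proof. by elim: s i => [|x s IH] [|i] //=; [elim: i | rewrite IH addnS]. Qed.

Lemma drop_vanish (t : seq nat) c : (forall i, c < i -> nth 0 t i = 0) ->
  drop c.+1 t = nseq (size t - c.+1) 0.
Proof.
move=> t_vanish; apply: (@eq_from_nth _ 0) => [|i]; rewrite size_drop ?size_nseq //.
by move=> lti; rewrite nth_drop nth_nseq lti t_vanish // ltnS leq_addr.
Qed.

Section LexIncrNth.
Variables (s t : seq nat) (c : nat).
Hypotheses (size_st : size s = size t) (lt_c : c < size t).
Hypothesis t_vanish : forall i, c < i -> nth 0 t i = 0.

Let drop_tE : drop c.+1 t = nseq (size (drop c.+1 s)) 0.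
Proof. by rewrite drop_vanish // size_drop size_st. Qed.

Let size_take_st : size (take c s) = size (take c t).
Proof. by rewrite !size_takel // ?size_st ltnW. Qed.

Let take_nthE :
  (take c.+1 s == take c.+1 t) = (take c s == take c t) && (nth 0 s c == nth 0 t c).
Proof. by rewrite !(take_nth 0) ?size_st // eqseq_rcons. Qed.

Let split_st : s = take c s ++ nth 0 s c :: drop c.+1 s /\
               t = take c t ++ nth 0 t c :: drop c.+1 t.
Proof. by rewrite -!drop_nth ?size_st // !cat_take_drop. Qed.

Lemma ltxi_incr_nth :
  (s < incr_nth t c :> lexi)%O = (s < t :> lexi)%O || (take c.+1 s == take c.+1 t).
Proof.
rewrite incr_nthE // take_nthE; case: split_st; rewrite drop_tE.
set s1 := take c s; set y := nth 0 s c; set s2 := drop c.+1 s.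
set t1 := take c t; set x := nth 0 t c.
by move=> -> ->; rewrite ltxi_bump.
Qed.

Lemma ltxi_take_eq : take c.+1 s == take c.+1 t -> (s < t :> lexi)%O = false.
Proof.
rewrite take_nthE => /andP[/eqP st /eqP eq_c].
by case: split_st => -> ->; rewrite drop_tE ltxi_bump_eq.
Qed.

End LexIncrNth.

Definition lex_above (A s : seq nat) : bool := (A <= take (size A) s :> lexi)%O.

Lemma lex_above_le A (s t : seq nat) :
  (s <= t :> lexi)%O -> lex_above A s -> lex_above A t.
Proof. by move=> /(lexi_take (size A)) le_st /le_trans; apply. Qed.

Lemma lex_above_lt A (s t : seq nat) :
  ~~ lex_above A s -> lex_above A t -> (s < t :> lexi)%O.
Proof.
rewrite /lex_above -ltNge => lt_sA le_At; rewrite ltNge.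
by apply: contraL (lt_le_trans lt_sA le_At) => /(lexi_take (size A)); rewrite leNgt.
Qed.

Lemma lex_above_take A (s : seq nat) j :
  size A <= j -> lex_above A (take j s) = lex_above A s.
Proof. by move=> le_Aj; rewrite /lex_above take_takel. Qed.

Lemma lex_above_rcons0 A (s : seq nat) :
  size A < size s -> lex_above (rcons A 0) s = lex_above A s.
Proof.
move=> lt_As; rewrite /lex_above size_rcons (take_nth 0) // !leNgt -cats1 -(cats1 A).
by rewrite ltxi_cat ?size_takel 1?ltnW // ltxi_cons ltxx implybF le0x !andbF orbF.
Qed.

(** * Compositions *)

Fixpoint comps (N d : nat) : seq (seq nat) :=
  if N is N'.+1 then [seq c :: s | c <- iota 0 d.+1, s <- comps N' (d - c)]
  else if d == 0 then [:: [::]] else [::].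

Lemma comps0 d : comps 0 d = if d == 0 then [:: [::]] else [::].
Proof. by []. Qed.

Lemma compsS N d :
  comps N.+1 d = [seq c :: s | c <- iota 0 d.+1, s <- comps N (d - c)].
Proof. by []. Qed.

Arguments comps : simpl never.

Lemma mem_comps N d s : (s \in comps N d) = (size s == N) && (sumn s == d).
Proof.
elim: N d s => [|N IH] d s; first by case: s d => [|? ?] [|?].
rewrite compsS; apply/allpairsPdep/andP => [[c [s' [cd s'_in ->]]]|[]].
  move: cd s'_in; rewrite mem_iota ltnS IH /= eqSS => cd /andP[-> /eqP ->].
  by rewrite subnKC.
case: s => [|c s] // sz sm; exists c, s.
rewrite mem_iota IH; move: sz sm => /=; rewrite eqSS => -> /eqP <-.
by rewrite add0n ltnS leq_addr addKn eqxx.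
Qed.

Lemma uniq_comps N d : uniq (comps N d).
Proof.
elim: N d => [|N IH] d; first by case: d.
rewrite compsS; apply: allpairs_uniq_dep => [||[? ?] [? ?] _ _ [-> ->]] //.
exact: iota_uniq.
Qed.

Lemma count_compsS N d (Q : pred (seq nat)) : count Q (comps N.+1 d) =
  \sum_(c < d.+1) count (fun s => Q ((c : nat) :: s)) (comps N (d - c)).
Proof.
rewrite compsS count_flatten sumnE !big_map.
rewrite -(big_mkord xpredT (fun c => count (fun s => Q (c :: s)) (comps N (d - c)))).
by rewrite /index_iota subn0; apply: eq_bigr => c _; rewrite count_map.
Qed.

Lemma size_comps q d : size (comps q.+1 d) = 'C(d + q, q).
Proof.
elim: q d => [|q IHq] d; rewrite -count_predT count_compsS.
  rewrite big_ord_recr big1 => [|c _]; rewrite comps0 ?subnn ?bin0 //.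
  by rewrite subn_eq0 leqNgt /= ltn_ord.
under eq_bigr => c _ do rewrite count_predT IHq.
elim: d => [|d IHd]; first by rewrite big_ord1 !binn.
by rewrite big_ord_recl subn0 IHd addSn -addnS addSn binS addnC.
Qed.

Lemma count_comps_prefix (t : seq nat) k N d : size t = k -> k <= N -> sumn t <= d ->
  count (fun s => take k s == t) (comps N d) = size (comps (N - k) (d - sumn t)).
Proof.
move=> <-; elim: t N d => [|c t IH] N d.
  rewrite !subn0 -(count_predT (comps N d)) => _ _.
  by apply: eq_count => s; rewrite take0.
case: N => // N /[!ltnS] le_tN le_ctd.
have lt_cd : c < d.+1 by rewrite ltnS (leq_trans (leq_addr _ _) le_ctd).
rewrite count_compsS (bigD1 (Ordinal lt_cd)) //= big1 => [|c' ne_c'c].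
  rewrite addn0 subSS subnDA -IH ?leq_subRL ?(leq_trans (leq_addr _ _) le_ctd) //.
  by apply: eq_count => s; rewrite /= eqseq_cons eqxx.
apply/eqP; rewrite -leqn0 leqNgt -has_count; apply/hasPn => s _ /=.
by rewrite eqseq_cons; apply: contra ne_c'c => /andP[/eqP eq_c'c _]; apply/eqP/val_inj.
Qed.

(** * Counting the monomials below the Gotzmann vector *)

Definition gotz_count (r : nat) (b : nat -> nat) (e : nat) : nat :=
  count (fun j => b j == e) (iota 0 r).

(* The exponent vector (a_(n-1), ..., a_0) of x_0^a_(n-1) ... x_(n-1)^a_0,
   the last generator of L(a_0, ..., a_(n-1)). *)
Definition lvec (a : nat -> nat) (n : nat) : seq nat := rev (mkseq a n).

Lemma size_lvec a n : size (lvec a n) = n.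
Proof. by rewrite size_rev size_mkseq. Qed.

Lemma nth_lvec a n i : i < n -> nth 0 (lvec a n) i = a (n.-1 - i).
Proof. by move=> lt_in; rewrite nth_rev size_mkseq // nth_mkseq; [congr a|]; lia. Qed.

Lemma lvec_shift0 a n : lvec (shift0 a) n.+1 = rcons (lvec a n) 0.
Proof. by rewrite /lvec /mkseq /= (iotaDl 1 0) -map_comp rev_cons. Qed.

Lemma gotz_countS r b e : gotz_count r.+1 b e = gotz_count r b e + (b r == e).
Proof. by rewrite /gotz_count -addn1 iotaD count_cat /= addn0. Qed.

Lemma lvec_gotz_succ r b n :
  lvec (gotz_count r (fun j => (b j).+1)) n.+1 = rcons (lvec (gotz_count r b) n) 0.
Proof.
rewrite -lvec_shift0; congr rev; apply: eq_mkseq => -[|e] /=.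
  by rewrite /gotz_count (@eq_count _ _ pred0) ?count_pred0.
by apply: eq_count => j; rewrite /= eqSS.
Qed.

Lemma lvec_gotz_countS p r b : b r < p ->
  lvec (gotz_count r.+1 b) p = incr_nth (lvec (gotz_count r b) p) (p.-1 - b r).
Proof.
move=> lt_brp; apply: (@eq_from_nth _ 0) => [|i]; rewrite ?size_incr_nth !size_lvec.
  by rewrite ifT //; lia.
move=> lt_ip; rewrite nth_incr_nth !nth_lvec // gotz_countS addnC.
by congr (nat_of_bool _ + _); apply/eqP/eqP; lia.
Qed.

Lemma sumn_lvec_gotz p r b :
  (forall j, j < r -> b j < p) -> sumn (lvec (gotz_count r b) p) = r.
Proof.
elim: r => [|r IH] lt_bp; first by rewrite sumn_rev /mkseq sumnE big_map big1.
rewrite lvec_gotz_countS ?sumn_incr_nth ?IH // => [j lt_jr|].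
  exact/lt_bp/ltnW.
exact: lt_bp.
Qed.

(* Induction on r: adding b_r raises the entry of A at c = p - 1 - b_r, past
   which A vanishes as b is nonincreasing; the prefixes that become smaller
   than A are those agreeing with A up to c. *)
Lemma count_lt_lvec_gotz p r b d :
    gotz_seq r b -> (forall j, j < r -> b j < p) -> r <= d ->
  count (fun s => (take p s < lvec (gotz_count r b) p :> lexi)%O) (comps p.+1 d) =
  \sum_(j < r) 'C(d - j + b j, b j).
Proof.
have size_take_comps d' s : s \in comps p.+1 d' -> size (take p s) = p.
  by rewrite mem_comps => /andP[/eqP size_s _]; rewrite size_takel // size_s.
elim: r => [|r IH] b_noninc lt_bp le_rd.
  rewrite big_ord0 (@eq_in_count _ _ pred0) ?count_pred0 // => s /size_take_comps size_s.
  suff -> : lvec (gotz_count 0 b) p = nseq (size (take p s)) 0 by rewrite ltxi_nseq0.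
  apply: (@eq_from_nth _ 0) => [|i]; rewrite size_lvec size_s ?size_nseq // => lt_ip.
  by rewrite nth_lvec // nth_nseq lt_ip.
have lt_brp : b r < p by exact: lt_bp.
set A := lvec (gotz_count r b) p; set c := p.-1 - b r.
have size_A : size A = p by rewrite size_lvec.
have lt_cp : c < p by lia.
have A_vanish i : c < i -> nth 0 A i = 0.
  move=> lt_ci; case: (ltnP i p) => [lt_ip|?]; last by rewrite nth_default ?size_A.
  rewrite nth_lvec // /gotz_count (@eq_in_count _ _ pred0) ?count_pred0 // => j.
  rewrite mem_iota => /andP[_ lt_jr] /=; have := b_noninc j r (ltnW lt_jr) (ltnSn r); lia.
have sum_take_A : sumn (take c.+1 A) = r.
  have <- : sumn A = r by apply: sumn_lvec_gotz => j lt_jr; exact/lt_bp/ltnW.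
  rewrite -{2}(cat_take_drop c.+1 A) sumn_cat (drop_vanish A_vanish).
  by rewrite sumn_nseq mul0n addn0.
rewrite big_ord_recr /= -IH => [||j lt_jr|]; last 3 first.
- by move=> i j le_ij lt_jr; apply: b_noninc => //; apply: ltnW.
- exact/lt_bp/ltnW.
- exact: ltnW.
have -> : 'C(d - r + b r, b r) =
    count (fun s => take c.+1 s == take c.+1 A) (comps p.+1 d).
  rewrite count_comps_prefix ?size_takel ?size_A ?sum_take_A ?ltnS ?(ltnW lt_cp) //.
    by rewrite (_ : p.+1 - c.+1 = (b r).+1) ?size_comps //; lia.
  exact: ltnW.
rewrite lvec_gotz_countS // -/A -/c -count_predUI.
rewrite (@eq_in_count _ (predI _ _) pred0) ?count_pred0 ?addn0.
  apply: eq_in_count => s /size_take_comps size_s /=.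
  by rewrite ltxi_incr_nth ?size_A // take_takel.
move=> s /size_take_comps size_s /=.
rewrite -(take_takel s lt_cp); case: eqP => [/eqP eq_take|]; last by rewrite andbF.
by rewrite (ltxi_take_eq _ _ A_vanish eq_take) ?size_A.
Qed.

(** * Exponent vectors *)

Section Monomials.
Variable N : nat.
Implicit Types (u v w : 'X_{1..N}).

Lemma size_mnm u : size u = N.
Proof. exact: size_tuple. Qed.

Lemma nth_mnm u (i : 'I_N) : nth 0 u i = u i.
Proof. by rewrite (mnm_nth 0). Qed.

Lemma sumn_mnm u : sumn u = mdeg u.
Proof. by rewrite sumnE. Qed.

Lemma lex_gtE u v : lex_gt u v = (v < u :> lexi)%O.
Proof.
rewrite -[RHS]/((multinom_val v : N.-tuplelexi nat) < multinom_val u)%O.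
apply/existsP/ltxi_tuplePlt => [[i /andP[lt_vu /forallP eq_uv]]|[i eq_vu lt_vu]].
  by exists i => [j lt_ji|]; [apply/esym/eqP/(implyP (eq_uv j)) | rewrite ltEnat].
exists i; move: lt_vu; rewrite ltEnat => /= ->.
by apply/forallP => j; apply/implyP => /eq_vu eq_j; apply/eqP/esym.
Qed.

Lemma lexi_mnm u v : (forall i, u i <= v i) -> (u <= v :> lexi)%O.
Proof.
move=> le_uv; apply: lexi_nth => [|i]; first by rewrite !size_mnm.
case: (ltnP i N) => [lt_iN|le_Ni]; last by rewrite !nth_default ?size_mnm.
by rewrite !(nth_mnm _ (Ordinal lt_iN)).
Qed.

Lemma lex_above_mnmD A u w : lex_above A u -> lex_above A (w + u)%MM.
Proof. by apply/lex_above_le/lexi_mnm => i; rewrite mnmDE leq_addl. Qed.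

Lemma take_mnm_eq u v j :
  (forall i : 'I_N, i < j -> u i = v i) -> take j u = take j v.
Proof.
move=> eq_uv; apply: (@eq_from_nth _ 0) => [|i]; rewrite !size_take_min !size_mnm //.
rewrite leq_min => /andP[lt_ij lt_iN].
by rewrite !nth_take // !(nth_mnm _ (Ordinal lt_iN)) eq_uv.
Qed.

Lemma card_mdeg_comps d (Q : pred (seq nat)) :
  #|[set v : 'X_{1..N < d.+1} | (mdeg v == d) && Q v]| = count Q (comps N d).
Proof.
pose degd := [seq (bmnm v : seq nat) | v : 'X_{1..N < d.+1} <-
                enum [pred v : 'X_{1..N < d.+1} | mdeg v == d]].
have -> : #|[set v : 'X_{1..N < d.+1} | (mdeg v == d) && Q v]| = count Q degd.
  rewrite count_map -size_filter cardsE cardE; apply/perm_size/uniq_perm.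
  - exact: enum_uniq.
  - exact/filter_uniq/enum_uniq.
  - by move=> v; rewrite mem_enum mem_filter mem_enum !inE andbC.
apply/permP/uniq_perm; [|exact: uniq_comps|move=> s].
  rewrite map_inj_in_uniq ?enum_uniq // => v w _ _ eq_vw.
  by do 3 apply: val_inj.
rewrite mem_comps; apply/mapP/andP => [[v]|[/eqP size_s /eqP sum_s]].
  by rewrite mem_enum inE => /eqP deg_v ->; rewrite size_mnm sumn_mnm deg_v.
have size_s' : size s == N by rewrite size_s.
have deg_s : mdeg (Multinom (Tuple size_s')) < d.+1 by rewrite -sumn_mnm sum_s.
by exists (BMultinom deg_s); rewrite // mem_enum inE /= -sumn_mnm sum_s.
Qed.

Lemma nmonE d : nmon N d = size (comps N d).
Proof.
rewrite /nmon -count_predT -card_mdeg_comps.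
by apply: eq_card => v; rewrite !inE andbT.
Qed.

(* The positivity hypothesis makes the truncated subtraction [nmon N d - h d] exact. *)
Lemma lex_top_lex_above (A : seq nat) (h : nat -> nat) d :
    0 < nmon N d - h d -> nmon N d - h d = count (predC (lex_above A)) (comps N d) ->
  forall v, mdeg v = d -> lex_top h v = lex_above A v.
Proof.
move=> pos_hilb hilbE v deg_v.
have hE : h d = #|[set w : 'X_{1..N < d.+1} | (mdeg w == d) && lex_above A w]|.
  rewrite card_mdeg_comps; move: pos_hilb hilbE.
  by rewrite nmonE -(count_predC (lex_above A)); lia.
have lt_vd : mdeg v < d.+1 by rewrite deg_v.
rewrite /lex_top deg_v hE; case: (boolP (lex_above A v)) => above_v.
  apply/proper_card/properP; split.
    apply/subsetP => w; rewrite !inE => /andP[-> gt_wv] /=.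
    by apply: lex_above_le above_v; rewrite ltW // -lex_gtE.
  by exists (BMultinom lt_vd); rewrite !inE /= ?deg_v ?eqxx ?above_v // lex_gtE ltxx.
apply/negbTE; rewrite -leqNgt; apply/subset_leq_card/subsetP => w.
by rewrite !inE => /andP[-> above_w]; rewrite lex_gtE (lex_above_lt above_v above_w).
Qed.

End Monomials.

Lemma mnmwidenE N (v : 'X_{1..N}) : (mnmwiden v : seq nat) = rcons v 0.
Proof. by []. Qed.

Lemma LgenE n a kk (i : 'I_n.+1) : Lgen_exp n a kk i =
  if i < kk then a (n.-1 - i)
  else if i == kk :> nat then a (n.-1 - kk) + (kk < n.-1) else 0.
Proof. exact: mnmE. Qed.

Lemma Lgen_le n a kk (u : 'X_{1..n.+1}) : kk < n ->
    (forall j, j < kk -> nth 0 (lvec a n) j = nth 0 u j) ->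
    nth 0 (lvec a n) kk + (kk < n.-1) <= nth 0 u kk ->
  (Lgen_exp n a kk <= u)%MM.
Proof.
move=> lt_kn eq_before le_at; apply/mnm_lepP => j; rewrite LgenE -nth_mnm.
case: ltngtP => [lt_jk|//|eq_jk].
  by rewrite -eq_before // nth_lvec // (ltn_trans lt_jk).
by rewrite -eq_jk -nth_lvec // eq_jk.
Qed.

Lemma lex_above_Lgen n a kk : kk < n -> lex_above (lvec a n) (Lgen_exp n a kk).
Proof.
move=> lt_kn; rewrite /lex_above size_lvec.
have size_take : size (take n (Lgen_exp n a kk)) = n by rewrite size_takel // size_mnm.
have nth_take_Lgen j : j < n -> nth 0 (take n (Lgen_exp n a kk)) j =
    if j < kk then nth 0 (lvec a n) j
    else if j == kk then nth 0 (lvec a n) j + (kk < n.-1) else 0.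
  move=> lt_jn; rewrite nth_take // (nth_mnm _ (Ordinal (ltnW lt_jn : j < n.+1))).
  by rewrite LgenE /= nth_lvec //; case: eqP => [->|].
case: (ltnP kk n.-1) => [lt_kk|le_kk].
  apply/ltW/ltxi_nthP; first by rewrite size_lvec size_take.
  exists kk; rewrite size_lvec nth_take_Lgen // ltnn eqxx lt_kk addn1; split=> // j lt_jk.
  by rewrite nth_take_Lgen ?lt_jk // (ltn_trans lt_jk).
suff -> : take n (Lgen_exp n a kk) = lvec a n by rewrite lexx.
apply: (@eq_from_nth _ 0) => [|j]; rewrite ?size_lvec ?size_take // => lt_jn.
rewrite nth_take_Lgen //; case: ltngtP => // [lt_kj|->]; last by rewrite ltnNge le_kk addn0.
by move: lt_kj le_kk lt_jn; lia.
Qed.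

Lemma has_Lgen_le n a (u : 'X_{1..n.+1}) : 0 < n ->
  has (fun kk => Lgen_exp n a kk <= u)%MM (iota 0 n) = lex_above (lvec a n) u.
Proof.
move=> n_gt0; apply/hasP/idP => [[kk]|above_u].
  rewrite mem_iota => /andP[_ lt_kn] /mnm_lepP /lexi_mnm le_u.
  exact: lex_above_le le_u (lex_above_Lgen a lt_kn).
suff [kk [lt_kn eq_before le_at]] : exists kk, [/\ kk < n,
    forall j, j < kk -> nth 0 (lvec a n) j = nth 0 u j &
    nth 0 (lvec a n) kk + (kk < n.-1) <= nth 0 u kk].
  by exists kk; rewrite ?mem_iota ?Lgen_le.
have [eq_uA|ne_uA] := eqVneq (take n u) (lvec a n).
  exists n.-1; rewrite ltnn addn0 -eq_uA; split => [|j lt_j|]; rewrite ?nth_take //; lia.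
have /ltxi_nthP [|kk [lt_kA lt_at eq_before]] : (lvec a n < take n u :> lexi)%O.
- by rewrite lt_neqAle eq_sym ne_uA -{2}(size_lvec a n).
- by rewrite size_lvec size_takel // size_mnm.
rewrite size_lvec in lt_kA; exists kk; split => // [j lt_jk|].
  by rewrite eq_before ?nth_take // (ltn_trans lt_jk).
rewrite -(nth_take _ lt_kA u) (leq_trans _ lt_at) //.
by rewrite -[X in _ <= X]addn1 leq_add2l leq_b1.
Qed.

(** * Monomial ideals cut out by a lexicographic bound *)

Section MonomialIdeals.
Variable k : fieldType.
Local Open Scope ring_scope.

Definition lexseg_ideal N (A : seq nat) (f : {mpoly k[N]}) : Prop :=
  forall u, u \in msupp f -> lex_above A u.

Lemma gen_idealX N (ms : seq 'X_{1..N}) (f : {mpoly k[N]}) :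
  gen_ideal [seq 'X_[m] | m <- ms] f <->
  forall u, u \in msupp f -> has (fun m => m <= u)%MM ms.
Proof.
rewrite /gen_ideal size_map; split => [[c [_ ->]] u|divf].
  move=> /msupp_sum_le /flattenP[_ /mapP[i _ ->]].
  rewrite (nth_map 0%MM) // (perm_mem (msuppMX _ _)) => /mapP[u' _ ->].
  by apply/hasP; exists (nth 0%MM ms i); rewrite ?mem_nth // lem_addr.
pose idx u := find (fun m => m <= u)%MM ms.
pose c i := \sum_(u <- msupp f | idx u == i) f@_u *: 'X_[u - nth 0%MM ms i].
exists (mkseq c (size ms)); rewrite size_mkseq; split => //.
transitivity (\sum_(i < size ms) c i * 'X_[nth 0%MM ms i]); last first.
  by apply: eq_bigr => i _; rewrite nth_mkseq // (nth_map 0%MM).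
under eq_bigr => i _ do rewrite mulr_suml.
rewrite {1}(mpolyE f) (exchange_big_dep xpredT) //=.
apply: eq_big_seq => u /divf has_u.
have lt_idx : (idx u < size ms)%N by rewrite -has_find.
rewrite (big_pred1 (Ordinal lt_idx)) => [|i]; last by rewrite /= eq_sym -val_eqE.
by rewrite -scalerAl -mpolyXD submK // (nth_find 0%MM has_u).
Qed.

Lemma L_idealE n a : (0 < n)%N ->
  same_ideal (@L_ideal k n a) (lexseg_ideal (lvec a n)).
Proof.
move=> n_gt0 f; rewrite /L_ideal (map_comp (fun m => 'X_[m]) (Lgen_exp n a)) gen_idealX.
by split=> seg_f u /seg_f; rewrite has_map has_Lgen_le.
Qed.

Lemma saturation_lex_idealE p (A : seq nat) (h : nat -> nat) d1 : (size A <= p)%N ->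
    (forall v : 'X_{1..p.+1}, (d1 <= mdeg v)%N -> lex_top h v = lex_above A v) ->
  same_ideal (saturation (@lex_ideal k p.+1 h)) (lexseg_ideal A).
Proof.
move=> le_Ap lex_topE f; split => [[e sat_f] u u_f|seg_f]; last first.
  exists d1 => g pow_g m /msuppM_le /allpairsP[[m1 m2] [/= m1_g m2_f ->]].
  rewrite lex_topE ?lex_above_mnmD ?seg_f //.
  by rewrite mdegD (leq_trans (pow_g _ m1_g) (leq_addr _ _)).
(* x_p^E, with E large, does not touch the first p >= size A exponents. *)
pose w : 'X_{1..p.+1} := (U_(ord_max) *+ maxn e d1)%MM.
have deg_w : mdeg w = maxn e d1 by rewrite mdegMn mdeg1 mul1n.
have /sat_f /(_ (w + u)%MM) : irr_pow e ('X_[w] : {mpoly k[p.+1]}).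
  by move=> m; rewrite msuppX mem_seq1 => /eqP ->; rewrite deg_w leq_maxl.
rewrite mcoeff_msupp mulrC mcoeffMX -mcoeff_msupp => /(_ u_f).
rewrite lex_topE ?mdegD ?deg_w ?(leq_trans (leq_maxr _ _) (leq_addr _ _)) //.
rewrite /lex_above (@take_mnm_eq _ _ u) // => i lt_iA.
rewrite mnmDE mulmnE mnm1E; suff /negPf -> : ord_max != i by [].
by rewrite neq_ltn /= (leq_trans lt_iA le_Ap) orbT.
Qed.

Lemma msupp_mwiden N (q : {mpoly k[N]}) m :
  m \in msupp (mwiden q) -> exists2 v, v \in msupp q & m = mnmwiden v.
Proof.
rewrite {1}(mpolyE q) raddf_sum /= => /msupp_sum_le /flattenP[_ /mapP[v v_q ->]].
rewrite mwidenZ mwidenX => /msuppZ_le; rewrite msuppX mem_seq1 => /eqP ->.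
by exists v; rewrite // -(filter_predT (msupp q)).
Qed.

Lemma ext_lexseg_ideal N (A : seq nat) : (size A <= N)%N ->
  same_ideal (ext_ideal (@lexseg_ideal N A)) (@lexseg_ideal N.+1 (rcons A 0%N)).
Proof.
move=> le_AN f; split => [[r [g [q [seg_q ->]]]]|seg_f].
  move=> m /msupp_sum_le /flattenP[_ /mapP[j _ ->]].
  move=> /msuppM_le /allpairsP[[m1 m2] [/= _ m2_q ->]].
  have [v v_q ->] := msupp_mwiden m2_q.
  rewrite lex_above_rcons0 ?size_mnm // lex_above_mnmD //.
  by rewrite /lex_above mnmwidenE -cats1 takel_cat ?size_mnm //; apply: seg_q v_q.
pose widen := widen_ord (leqnSn N).
pose init (u : 'X_{1..N.+1}) : 'X_{1..N} := [multinom u (widen i) | i < N].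
have initE u : (init u : seq nat) = take N u.
  apply: (@eq_from_nth _ 0) => [|i]; rewrite size_mnm ?size_takel ?size_mnm // => lt_iN.
  rewrite (nth_mnm _ (Ordinal lt_iN)) nth_take // mnmE.
  by rewrite (nth_mnm _ (widen (Ordinal lt_iN))).
have init_le u : (mnmwiden (init u) <= u)%MM.
  apply/mnm_lepP => i; case: (ltnP i N) => [lt_iN|le_Ni].
    rewrite (_ : i = widen (Ordinal lt_iN)) ?mnmwiden_widen ?mnmE //.
    exact: val_inj.
  rewrite (_ : i = ord_max) ?mnmwiden_ordmax //.
  by apply/val_inj/eqP; rewrite /= eqn_leq le_Ni andbT -ltnS.
set s := msupp f; exists (size s).
exists (fun j => f@_(nth 0%MM s j) *: 'X_[nth 0%MM s j - mnmwiden (init (nth 0%MM s j))]).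
exists (fun j => 'X_[init (nth 0%MM s j)]); split.
  move=> j m; rewrite msuppX mem_seq1 => /eqP ->.
  rewrite initE lex_above_take // -lex_above_rcons0 ?size_mnm ?ltnS //.
  by apply/seg_f/mem_nth.
rewrite {1}(mpolyE f) -/s (big_nth 0%MM) big_mkord; apply: eq_bigr => j _.
by rewrite mwidenX -scalerAl -mpolyXD submK.
Qed.

End MonomialIdeals.

Lemma same_ideal_ext (k : fieldType) N (I J : {mpoly k[N]} -> Prop) :
  same_ideal I J -> same_ideal (ext_ideal I) (ext_ideal J).
Proof.
by move=> IJ f; split=> -[r [g [q [Iq ->]]]]; exists r, g, q; split=> // j; apply/IJ.
Qed.

(** * Gotzmann polynomials *)

Section GotzmannPolynomial.
Local Open Scope ring_scope.

Lemma binpolyE (a : int) (b : nat) :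
  binpoly a b = (b`!%:R)^-1 *: \prod_(i < b) ('X - (- (a - i%:Z)%:~R)%:P).
Proof. by congr (_ *: _); apply: eq_bigr => i _; rewrite polyCN opprK. Qed.

Lemma size_binpoly a b : size (binpoly a b) = b.+1.
Proof.
rewrite binpolyE size_scale ?invr_eq0 ?pnatr_eq0 -?lt0n ?fact_gt0 //.
by rewrite size_prod_XsubC -[index_enum _]enumT size_enum_ord.
Qed.

Lemma lead_coef_binpoly a b : lead_coef (binpoly a b) = (b`!%:R)^-1.
Proof. by rewrite binpolyE lead_coefZ lead_coef_prod_XsubC mulr1. Qed.

Lemma binpoly_nat (d j e : nat) : (j <= d)%N ->
  (binpoly (e%:Z - j%:Z) e).[d%:R] = 'C(d - j + e, e)%:R.
Proof.
move=> le_jd; rewrite /binpoly hornerZ horner_prod.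
under eq_bigr => i _.
  rewrite hornerD hornerX hornerC -[d%:R]/(d%:~R : rat) -intrD.
  rewrite (_ : _ + _ = (d - j + e - i)%N%:Z); last by have := ltn_ord i; lia.
  over.
by rewrite -natr_prod -ffact_prod -bin_ffact natrM mulrC mulfK ?pnatr_eq0 -?lt0n ?fact_gt0.
Qed.

Lemma gotzmann_nat r b (d : nat) : (r <= d)%N ->
  (gotzmann r b).[d%:R] = (\sum_(j < r) 'C(d - j + b j, b j))%:R.
Proof.
move=> le_rd; rewrite horner_sum natr_sum; apply: eq_bigr => j _.
by rewrite binpoly_nat // ltnW // (leq_trans (ltn_ord j)).
Qed.

Lemma gotzmann_lambdaE r b : gotzmann_lambda r b = gotzmann r (fun j => (b j).+1).
Proof. by apply: eq_bigr => j _; rewrite -addn1 PoszD. Qed.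

Lemma gotzmann0 b : gotzmann 0 b = 0.
Proof. exact: big_ord0. Qed.

Lemma size_gotzmann r b : (0 < r)%N -> gotz_seq r b -> size (gotzmann r b) = (b 0%N).+1.
Proof.
move=> r_gt0 b_noninc; have le_b0 (j : 'I_r) : (b j <= b 0%N)%N by apply: b_noninc.
apply/anti_leq/andP; split.
  apply: (leq_trans (size_sum _ _ _)); apply/bigmax_leqP => j _.
  by rewrite size_binpoly ltnS.
have coef_top (j : 'I_r) : (binpoly ((b j)%:Z - j%:Z) (b j))`_(b 0%N) =
    if b j == b 0%N then (b 0%N)`!%:R^-1 else 0.
  case: eqP => [<-|ne_b].
    by rewrite -(lead_coef_binpoly ((b j)%:Z - j%:Z)) /lead_coef size_binpoly.
  by rewrite nth_default // size_binpoly ltn_neqAle le_b0 andbT; apply/eqP.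
suff nz_top : (gotzmann r b)`_(b 0%N) != 0.
  by rewrite ltnNge; apply: contra nz_top => /(nth_default 0) ->.
rewrite coef_sum; under eq_bigr => j _ do rewrite coef_top.
rewrite (bigD1 (Ordinal r_gt0)) //= eqxx; apply/lt0r_neq0/ltr_wpDr.
  by rewrite sumr_ge0 // => j _; case: ifP; rewrite // invr_ge0 ler0n.
by rewrite invr_gt0 ltr0n fact_gt0.
Qed.

End GotzmannPolynomial.

Lemma saturation_lex_ideal_gotzmann (k : fieldType) p (h : nat -> nat) r b :
    0 < r -> gotz_seq r b -> (forall j, j < r -> b j < p) ->
    is_hilb_poly p.+1 h (gotzmann r b) ->
  same_ideal (saturation (@lex_ideal k p.+1 h)) (lexseg_ideal (lvec (gotz_count r b) p)).
Proof.
move=> r_gt0 b_noninc lt_bp [d0 hilbE].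
apply: (@saturation_lex_idealE _ _ _ _ (maxn d0 r)); first by rewrite size_lvec.
move=> v; rewrite geq_max => /andP[le_d0v le_rv]; set d := mdeg v.
have hilbd : nmon p.+1 d - h d = \sum_(j < r) 'C(d - j + b j, b j).
  apply/eqP; rewrite -(eqr_nat rat) -[(_%:R)%R]/((hilb_fun p.+1 h d)%:R)%R.
  by rewrite hilbE // gotzmann_nat.
apply: lex_top_lex_above => //; rewrite hilbd.
  by rewrite (bigD1 (Ordinal r_gt0)) //= subn0 ltn_addr // bin_gt0 leq_addl.
rewrite -(count_lt_lvec_gotz (p := p)) //; apply: eq_count => s.
by rewrite /= /lex_above size_lvec -ltNge.
Qed.

Unset Implicit Arguments.
Local Open Scope ring_scope.

Theorem proposition3p7 (k : closedFieldType) (P : {poly rat}) (n : nat) :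
  admissible k P -> (0 < n)%N -> ((size P).-1 < n)%N ->
  (forall (r : nat) (b : nat -> nat),
     gotz_seq r b -> P = gotzmann r b ->
     (* lambda(L^P_n) = L^{lambda P}_{n+1} *)
     (forall (I : {mpoly k[n.+1]} -> Prop) (h : nat -> nat)
             (I' : {mpoly k[n.+2]} -> Prop) (h' : nat -> nat),
        is_homog_ideal I -> (forall d, is_dim (deg_piece I d) (h d)) ->
        is_hilb_poly n.+1 h P ->
        is_homog_ideal I' -> (forall d, is_dim (deg_piece I' d) (h' d)) ->
        is_hilb_poly n.+2 h' (gotzmann_lambda r b) ->
        same_ideal (ext_ideal (saturation (@lex_ideal k n.+1 h)))
                   (saturation (@lex_ideal k n.+2 h')))
     (* codimension is preserved: (n+1) - deg lambda(P) = n - deg P *)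
     /\ (n.+1 - (size (gotzmann_lambda r b)).-1 = n - (size P).-1)%N)
  /\
  (* lambda(L(a_0,...,a_(n-1))) = L(0,a_0,...,a_(n-1)) *)
  (forall a : nat -> nat,
     same_ideal (ext_ideal (@L_ideal k n a)) (@L_ideal k n.+1 (shift0 a))).
Proof.
move=> [P_neq0 _] n_gt0 deg_lt; split => [r b b_noninc PE|a f]; last first.
  rewrite (same_ideal_ext (L_idealE a n_gt0)) ext_lexseg_ideal ?size_lvec //.
  by rewrite -lvec_shift0 -(L_idealE _ (ltn0Sn n)).
have r_gt0 : (0 < r)%N.
  by rewrite lt0n; apply: contra_neq P_neq0 => r0; rewrite PE r0 gotzmann0.
have deg_P : (size P).-1 = b 0%N by rewrite PE size_gotzmann.
have lt_bn j : (j < r)%N -> (b j < n)%N.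
  by move=> lt_jr; rewrite (leq_ltn_trans (b_noninc 0%N j _ lt_jr)) // -deg_P.
have b1_noninc : gotz_seq r (fun j => (b j).+1).
  by move=> i j le_ij lt_jr; rewrite ltnS b_noninc.
rewrite gotzmann_lambdaE size_gotzmann // deg_P subSS.
split => // I h I' h' _ _ hilb _ _ hilb' f; rewrite PE in hilb.
rewrite (same_ideal_ext (saturation_lex_ideal_gotzmann r_gt0 b_noninc lt_bn hilb)).
rewrite ext_lexseg_ideal ?size_lvec // -lvec_gotz_succ.
by rewrite (saturation_lex_ideal_gotzmann r_gt0 b1_noninc _ hilb').
Qed.
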